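(* Let $\lambda$ be a regular uncountable cardinal and suppose $\square(\lambda,<\omega)$ holds. Then for every stationary $S\subseteq\lambda$, $\mathrm{Refl}(2,S)$ fails; that is, there are two stationary subsets of $S$ that do not reflect simultaneously.
   Context: For a set of ordinals $A$, $\mathrm{acc}(A)$ is the set of $\beta<\sup\{\alpha+1\mid\alpha\in A\}$ with $\beta=\sup(A\cap\beta)$. A coherent sequence of length $\lambda$ and width $<\eta$ is $\mathcal{C}=\langle\mathcal{C}_\alpha\mid\alpha<\lambda\rangle$ where each $\mathcal{C}_\alpha$ is a nonempty set of fewer than $\eta$ closed unbounded subsets of $\alpha$ (for successor $\alpha=\beta+1$, $\mathcal{C}_\alpha=\{\{\beta\}\}$), such that for all $\beta<\lambda$, $C\in\mathcal{C}_\beta$ and $\alpha\in\mathrm{acc}(C)$, $C\cap\alpha\in\mathcal{C}_\alpha$. A thread is a club $D\subseteq\lambda$ with $D\cap\alpha\in\mathcal{C}_\alpha$ for all $\alpha\in\mathrm{acc}(D)$. $\square(\lambda,<\eta)$ asserts the existence of a coherent sequence of length $\lambda$ and width $<\eta$ with no thread; so $\square(\lambda,<\omega)$ concerns sequences with each $\mathcal{C}_\alpha$ finite. A stationary $S\subseteq\lambda$ reflects at $\alpha<\lambda$ if $\mathrm{cf}(\alpha)>\omega$ and $S\cap\alpha$ is stationary in $\alpha$; a collection of stationary sets reflects simultaneously if there is one $\alpha<\lambda$ at which all of them reflect. $\mathrm{Refl}(<\kappa,S)$ says every collection of fewer than $\kappa$ stationary subsets of $S$ reflects simultaneously; $\mathrm{Refl}(\kappa,S)$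 means $\mathrm{Refl}(<\kappa^+,S)$. *)

(* The cardinal lambda is represented by a well-ordered type
   (L, lt): elements of L are the ordinals below lambda. Subsets are
   predicates L -> Prop. *)
From Stdlib Require Import List.
Import ListNotations.

Section SetTheory.
Context {L : Type} (lt : L -> L -> Prop).

Definition le (x y : L) : Prop := lt x y \/ x = y.

Definition wellorder : Prop :=
  (forall x, ~ lt x x) /\
  (forall x y z, lt x y -> lt y z -> lt x z) /\
  (forall x y, lt x y \/ x = y \/ lt y x) /\
  well_founded lt.

Definition is_sup_below (A : L -> Prop) (b : L) : Prop :=
  forall g, lt g b -> exists a, A a /\ lt g a /\ lt a b.

Definition acc (A : L -> Prop) (b : L) : Prop :=
  (exists a, A a /\ le b a) /\ is_sup_below A b.

Definition club_in (a : L) (C : L -> Prop) : Prop :=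
  (forall x, C x -> lt x a) /\
  (forall g, lt g a -> exists d, C d /\ le g d) /\
  (forall b, lt b a -> (exists c, C c /\ lt c b) -> is_sup_below C b -> C b).

Definition club (C : L -> Prop) : Prop :=
  (forall g, exists d, C d /\ le g d) /\
  (forall b, (exists c, C c /\ lt c b) -> is_sup_below C b -> C b).

Definition succ_of (b a : L) : Prop :=
  lt b a /\ forall g, ~ (lt b g /\ lt g a).

Definition mem_fam (l : list (L -> Prop)) (C : L -> Prop) (a : L) : Prop :=
  exists D, In D l /\ forall x, D x <-> (C x /\ lt x a).

(* A coherent sequence of length lambda and width < omega: each C_a is a
   finite (list-enumerated) nonempty set of clubs in a. *)
Definition coherent_fin (Cs : L -> list (L -> Prop)) : Prop :=
  (forall a, Cs a <> []) /\
  (forall a C, In C (Cs a) -> club_in a C) /\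
  (forall b a, succ_of b a -> forall C, In C (Cs a) -> forall x, C x <-> x = b) /\
  (forall b C, In C (Cs b) -> forall a, acc C a -> mem_fam (Cs a) C a).

Definition thread (Cs : L -> list (L -> Prop)) (D : L -> Prop) : Prop :=
  club D /\ forall a, acc D a -> mem_fam (Cs a) D a.

Definition square_fin : Prop :=
  exists Cs, coherent_fin Cs /\ ~ exists D, thread Cs D.

Definition cf_gt_omega (a : L) : Prop :=
  (exists g, lt g a) /\
  forall f : nat -> L, (forall n, lt (f n) a) ->
    exists g, lt g a /\ forall n, lt (f n) g.

Definition stationary_in (a : L) (S : L -> Prop) : Prop :=
  forall C, club_in a C -> exists x, C x /\ S x.

Definition stationary (S : L -> Prop) : Prop :=
  forall C, club C -> exists x, C x /\ S x.

Definition reflects_at (S : L -> Prop) (a : L) : Prop :=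
  cf_gt_omega a /\ stationary_in a (fun x => S x /\ lt x a).

(* lambda is regular: every unbounded subset has order type lambda *)
Definition regular : Prop :=
  forall X : L -> Prop, (forall g, exists x, X x /\ le g x) ->
    exists f : L -> L,
      (forall x y, lt x y -> lt (f x) (f y)) /\
      (forall x, X (f x)) /\
      (forall y, X y -> exists x, f x = y).

Definition uncountable : Prop :=
  ~ exists f : L -> nat, forall x y, f x = f y -> x = y.

End SetTheory.

From Stdlib Require Import List Classical ClassicalEpsilon Lia.

(* The club filter
   is countably complete, so [S] has a stationary part on which every [Cs a] has
   at most [n] members. If, for a stationary [T], the [j]-th clubs [E a] (a ∈ T)
   decided each [c] in the same way for almost all [a], a diagonal intersection
   would make them initial segments of a single club [D], and coherence would
   make [D] a thread. So any two stationary sets can be shrunk until some [c]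
   separates the [j1]-th clubs on the first from the [j2]-th clubs on the second;
   doing this for all [n²] index pairs yields [S1] and [S2]. Were both to reflect
   at [b], a club [C ∈ Cs b] would have accumulation points [x1 ∈ S1] and
   [x2 ∈ S2], and [C ∩ x1 ∈ Cs x1], [C ∩ x2 ∈ Cs x2] would agree below both,
   contradicting the separation. *)

Section ClubFilter.
Variables (L : Type) (lt : L -> L -> Prop).
Hypothesis Hwo : wellorder lt.

Lemma ord_irrefl x : ~ lt x x.
Proof. exact (proj1 Hwo x). Qed.

Lemma ord_trans x y z : lt x y -> lt y z -> lt x z.
Proof. exact (proj1 (proj2 Hwo) x y z). Qed.

Lemma ord_trichotomy x y : lt x y \/ x = y \/ lt y x.
Proof. exact (proj1 (proj2 (proj2 Hwo)) x y). Qed.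

Lemma ord_wf : well_founded lt.
Proof. exact (proj2 (proj2 (proj2 Hwo))). Qed.

Lemma ord_le_refl x : le lt x x.
Proof. now right. Qed.

Lemma ord_not_lt x y : ~ lt x y -> le lt y x.
Proof.
  intro H. destruct (ord_trichotomy x y) as [h|[h|h]];
    [contradiction | now right | now left].
Qed.

Lemma ord_not_le x y : ~ le lt x y -> lt y x.
Proof.
  intro H. destruct (ord_trichotomy x y) as [h|[h|h]]; auto;
    exfalso; apply H; [now left | now right].
Qed.

Lemma ord_le_lt_trans x y z : le lt x y -> lt y z -> lt x z.
Proof. intros [h|<-] h2; [eapply ord_trans|]; eauto. Qed.

Lemma ord_lt_le_trans x y z : lt x y -> le lt y z -> lt x z.
Proof. intros h [h2|<-]; [eapply ord_trans|]; eauto. Qed.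

Lemma ord_le_trans x y z : le lt x y -> le lt y z -> le lt x z.
Proof. intros [h|<-] h2; [left; eapply ord_lt_le_trans|]; eauto. Qed.

Lemma ord_le_not_lt x y : le lt x y -> ~ lt y x.
Proof. intros h h2. apply (ord_irrefl x). eapply ord_le_lt_trans; eauto. Qed.

Lemma ord_least (P : L -> Prop) :
  (exists x, P x) -> exists m, P m /\ forall y, P y -> le lt m y.
Proof.
  intros [x Px]. apply NNPP; intro Hn.
  enough (Hno : forall z, ~ P z) by exact (Hno x Px).
  intro z. induction z as [z IH] using (well_founded_ind ord_wf). intro Pz.
  apply Hn. exists z. split; [exact Pz|].
  intros y Py. apply ord_not_lt. intro h. exact (IH y h Py).
Qed.

Lemma ord_strict_mono_inflationary (k : L -> L) :
  (forall x y, lt x y -> lt (k x) (k y)) -> forall x, le lt x (k x).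
Proof.
  intros Hk x. apply ord_not_lt. intro H.
  destruct (ord_least (fun z => lt (k z) z) (ex_intro _ x H)) as [m [Hm Hmin]].
  exact (ord_le_not_lt _ _ (Hmin (k m) (Hk _ _ Hm)) Hm).
Qed.

Definition seq_sup (f : nat -> L) (s : L) : Prop :=
  (forall n, lt (f n) s) /\ forall g, lt g s -> exists n, le lt g (f n).

Lemma seq_sup_exists (f : nat -> L) u : (forall n, lt (f n) u) ->
  exists s, seq_sup f s /\ le lt s u.
Proof.
  intro Hu. destruct (ord_least (fun y => forall n, lt (f n) y) (ex_intro _ u Hu))
    as [s [Hs Hmin]].
  exists s. repeat split; auto.
  intros g Hg. apply NNPP; intro Hn. refine (ord_le_not_lt _ _ (Hmin g _) Hg).
  intro n. apply ord_not_le. intro h. apply Hn. eauto.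
Qed.

Lemma seq_sup_closed (f h : nat -> L) (C : L -> Prop) s : seq_sup f s ->
  (forall n, C (h n) /\ lt (f n) (h n) /\ lt (h n) s) ->
  (exists c, C c /\ lt c s) /\ is_sup_below lt C s.
Proof.
  intros [_ Hcof] Hh. split.
  - exists (h 0). split; apply Hh.
  - intros g Hg. destruct (Hcof g Hg) as [n Hn]. destruct (Hh n) as [? [? ?]].
    exists (h n). split; [|split]; auto. eapply ord_le_lt_trans; eauto.
Qed.

Lemma club_seq_sup (f h : nat -> L) (C : L -> Prop) s : club lt C -> seq_sup f s ->
  (forall n, C (h n) /\ lt (f n) (h n) /\ lt (h n) s) -> C s.
Proof.
  intros HC Hs Hh. destruct (seq_sup_closed f h C s Hs Hh). now apply (proj2 HC).
Qed.

Lemma iter_ord_lt (F : L -> L) x0 : (forall x, lt x (F x)) ->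
  forall m n, m < n -> lt (Nat.iter m F x0) (Nat.iter n F x0).
Proof.
  intros HF m n Hmn. induction n as [|n IH]; [lia|]. simpl.
  destruct (PeanoNat.Nat.eq_dec m n) as [->|Hne]; [apply HF|].
  eapply ord_trans; [apply IH; lia | apply HF].
Qed.

Lemma iter_ord_le (F : L -> L) x0 : (forall x, lt x (F x)) ->
  forall m n, m <= n -> le lt (Nat.iter m F x0) (Nat.iter n F x0).
Proof.
  intros HF m n Hmn. destruct (PeanoNat.Nat.eq_dec m n) as [->|Hne]; [apply ord_le_refl|].
  left. apply iter_ord_lt; auto; lia.
Qed.

Lemma is_sup_below_mono (P Q : L -> Prop) b :
  (forall x, P x -> Q x) -> is_sup_below lt P b -> is_sup_below lt Q b.
Proof. intros HPQ H g Hg. destruct (H g Hg) as [a [Ha Hga]]. eauto. Qed.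

Lemma club_ext (A B : L -> Prop) : club lt A -> (forall x, A x <-> B x) -> club lt B.
Proof.
  intros [Hu Hc] Hab. split.
  - intro g. destruct (Hu g) as [d [h1 h2]]. exists d. split; auto. now apply Hab.
  - intros b [c [h1 h2]] Hs. apply Hab, Hc.
    + exists c. split; auto. now apply Hab.
    + eapply is_sup_below_mono; [|exact Hs]. intro x; apply Hab.
Qed.

Lemma club_full : club lt (fun _ => True).
Proof. split; [intro g; exists g; split; [auto | apply ord_le_refl] | auto]. Qed.

Hypothesis Hreg : regular lt.
Hypothesis Hunc : uncountable (L := L).

Lemma unbounded_image_enum {A : Type} (P : A -> Prop) (p : A -> L) :
  (forall g, exists a, P a /\ le lt g (p a)) ->
  exists k : L -> A, (forall x, P (k x)) /\
    forall x y, lt x y -> lt (p (k x)) (p (k y)).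
Proof.
  intro Hu.
  destruct (Hreg (fun y => exists a, P a /\ p a = y)) as [g [Hg [HgX _]]].
  { intro x. destruct (Hu x) as [a [Pa Ha]]. eauto. }
  destruct (choice (fun x a => P a /\ p a = g x) HgX) as [k Hk].
  exists k. split; [apply Hk|]. intros x y Hxy.
  rewrite (proj2 (Hk x)), (proj2 (Hk y)). auto.
Qed.

Lemma no_countable_unbounded_image (p : nat -> L) :
  ~ forall g, exists n, le lt g (p n).
Proof.
  intro Hu. destruct (unbounded_image_enum (fun _ => True) p) as [k [_ Hk]].
  { intro g. destruct (Hu g) as [n Hn]. eauto. }
  apply Hunc. exists k. intros x y Hxy.
  destruct (ord_trichotomy x y) as [h|[h|h]]; auto; exfalso;
    pose proof (Hk _ _ h) as H; rewrite Hxy in H; exact (ord_irrefl _ H).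
Qed.

Lemma ord_no_max x : exists y, lt x y.
Proof.
  apply NNPP; intro Hn. apply (no_countable_unbounded_image (fun _ => x)).
  intro g. exists 0. apply ord_not_lt. intro h. eauto.
Qed.

Lemma seq_bounded (f : nat -> L) : exists u, forall n, lt (f n) u.
Proof.
  apply NNPP; intro Hn. apply (no_countable_unbounded_image f).
  intro g. apply NNPP; intro H. apply Hn. exists g. intro n.
  apply ord_not_le. intro h. eauto.
Qed.

Lemma mono_below_bounded (d : L) (h : L -> L) :
  (forall a b, lt a b -> lt b d -> le lt (h a) (h b)) ->
  exists u, forall a, lt a d -> le lt (h a) u.
Proof.
  intro Hmon. apply NNPP; intro Hn.
  destruct (unbounded_image_enum (fun a => lt a d) h) as [k [Hkd Hk]].
  { intro u. apply NNPP; intro H. apply Hn. exists u. intros a Ha.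
    apply ord_not_lt. intro h'. apply H. exists a. split; [auto | now left]. }
  assert (Hkinc : forall x y, lt x y -> lt (k x) (k y)).
  { intros x y Hxy. specialize (Hk x y Hxy).
    destruct (ord_trichotomy (k x) (k y)) as [H|[H|H]]; auto; exfalso.
    - rewrite H in Hk. exact (ord_irrefl _ Hk).
    - exact (ord_le_not_lt _ _ (Hmon _ _ H (Hkd x)) Hk). }
  exact (ord_le_not_lt _ _ (ord_strict_mono_inflationary k Hkinc d) (Hkd d)).
Qed.

Lemma club_above (A : L -> Prop) : club lt A -> forall x, exists y, A y /\ lt x y.
Proof.
  intros [Hu _] x. destruct (ord_no_max x) as [z Hz]. destruct (Hu z) as [y [Ay Hzy]].
  exists y. split; [exact Ay | eapply ord_lt_le_trans; eauto].
Qed.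

Lemma club_tail g : club lt (fun x => lt g x).
Proof.
  split.
  - intro h. destruct (ord_no_max g) as [y Hy]. destruct (classic (lt g h)) as [H|H].
    + exists h. split; [exact H | apply ord_le_refl].
    + exists y. split; [exact Hy|]. left. eapply ord_le_lt_trans; [apply ord_not_lt|]; eauto.
  - intros b [c [h1 h2]] _. eapply ord_trans; eauto.
Qed.

Lemma club_inter (A B : L -> Prop) : club lt A -> club lt B -> club lt (fun x => A x /\ B x).
Proof.
  intros HA HB. split.
  - intro g.
    destruct (choice _ (club_above A HA)) as [fA HfA].
    destruct (choice _ (club_above B HB)) as [fB HfB].
    set (F x := fA (fB x)). set (a n := Nat.iter n F g).
    assert (HF : forall x, lt x (F x)) by (intro; eapply ord_trans; [apply HfB | apply HfA]).
    destruct (seq_bounded a) as [u Hu]. destruct (seq_sup_exists a u Hu) as [s [Hs _]].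
    exists s. split; [split|].
    + apply (club_seq_sup a (fun n => a (S n)) A s HA Hs).
      intro n. split; [apply HfA | split; [apply HF | apply Hs]].
    + apply (club_seq_sup a (fun n => fB (a n)) B s HB Hs).
      intro n. split; [apply HfB | split; [apply HfB|]].
      eapply ord_trans; [apply HfA | apply (proj1 Hs (S n))].
    + left. apply (proj1 Hs 0).
  - intros b [c [[Ac Bc] cb]] Hs. split; [apply (proj2 HA) | apply (proj2 HB)].
    + exists c; auto.
    + eapply is_sup_below_mono; [|exact Hs]. now intros x [? ?].
    + exists c; auto.
    + eapply is_sup_below_mono; [|exact Hs]. now intros x [? ?].
Qed.

Lemma club_mono_sup (d s c : L) (h : L -> L) (C : L -> Prop) :
  club lt C -> lt c d ->
  (forall a b, lt a b -> lt b d -> le lt (h a) (h b)) ->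
  (forall a, lt a d -> le lt (h a) s) ->
  (forall y, (forall a, lt a d -> le lt (h a) y) -> le lt s y) ->
  (forall a, le lt c a -> lt a d -> C (h a)) -> C s.
Proof.
  intros HC Hcd Hmon Hbound Hleast HCh.
  destruct (classic (exists a, le lt c a /\ lt a d /\ h a = s)) as [[a [Hca [Had <-]]]|Hne].
  { now apply HCh. }
  assert (Hlt : forall a, le lt c a -> lt a d -> lt (h a) s).
  { intros a Hca Had. destruct (Hbound a Had) as [H|H]; [exact H|]. exfalso; eauto. }
  apply (proj2 HC).
  - exists (h c). split; [apply HCh | apply Hlt]; auto using ord_le_refl.
  - intros g Hg.
    assert (Ha' : exists a', lt a' d /\ lt g (h a')).
    { apply NNPP; intro Hn. refine (ord_le_not_lt _ _ (Hleast g _) Hg).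
      intros a Ha. apply ord_not_lt. intro H. eauto. }
    destruct Ha' as [a' [Ha'd Hga']]. destruct (classic (le lt c a')) as [Hca'|Ha'c].
    + exists (h a'). auto.
    + apply ord_not_le in Ha'c. exists (h c).
      split; [apply HCh; auto using ord_le_refl|].
      split; [|apply Hlt; auto using ord_le_refl].
      eapply ord_lt_le_trans; [exact Hga' | apply Hmon; auto].
Qed.

Lemma club_inter_below (d : L) (K : L -> L -> Prop) :
  (forall c, lt c d -> club lt (K c)) -> club lt (fun x => forall c, lt c d -> K c x).
Proof.
  induction d as [d IH] using (well_founded_ind ord_wf). intro HK. split.
  - intro g. destruct (classic (exists c0, lt c0 d)) as [[c0 Hc0]|Hnd].
    2:{ exists g. split; [intros c Hc; exfalso; eauto | apply ord_le_refl]. }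
    set (P a y := le lt g y /\ forall c, le lt c a -> K c y).
    assert (Hh : forall a, exists y, lt a d -> P a y /\ forall z, P a z -> le lt y z).
    { intro a. destruct (classic (lt a d)) as [Ha|Ha]; [|exists g; tauto].
      assert (HZ : club lt (fun x => (forall c, lt c a -> K c x) /\ K a x)).
      { apply club_inter; [apply IH; auto|auto].
        intros c Hc. apply HK. eapply ord_trans; eauto. }
      destruct (proj1 HZ g) as [x [[Hx1 Hx2] Hgx]].
      destruct (ord_least (P a)) as [m Hm].
      { exists x. split; [exact Hgx|]. intros c [Hc|<-]; auto. }
      exists m. auto. }
    destruct (choice _ Hh) as [h Hhp].
    assert (Hmon : forall a b, lt a b -> lt b d -> le lt (h a) (h b)).
    { intros a b Hab Hbd. apply (proj2 (Hhp a (ord_trans _ _ _ Hab Hbd))).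
      destruct (proj1 (Hhp b Hbd)) as [Hgb HKb]. split; [exact Hgb|].
      intros c Hc. apply HKb. left. eapply ord_le_lt_trans; eauto. }
    destruct (mono_below_bounded d h Hmon) as [u Hu].
    destruct (ord_least (fun y => forall a, lt a d -> le lt (h a) y) (ex_intro _ u Hu))
      as [s [Hs Hsmin]].
    exists s. split.
    + intros c Hc. apply (club_mono_sup d s c h (K c)); auto.
      intros a Hca Had. apply (proj1 (Hhp a Had)), Hca.
    + eapply ord_le_trans; [apply (proj1 (Hhp c0 Hc0)) | apply Hs, Hc0].
  - intros b [x [Hx1 Hx2]] Hs c Hc. apply (proj2 (HK c Hc)).
    + exists x; auto.
    + eapply is_sup_below_mono; [|exact Hs]. auto.
Qed.

Lemma club_countable_inter (K : nat -> L -> Prop) :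
  (forall n, club lt (K n)) -> club lt (fun x => forall n, K n x).
Proof.
  intro HK. split.
  - intro g. destruct (choice _ ord_no_max) as [next Hnext].
    set (e n := Nat.iter n next g).
    assert (He : forall m n, e m = e n -> m = n).
    { intros m n Hmn. destruct (PeanoNat.Nat.lt_trichotomy m n) as [H|[H|H]]; auto; exfalso;
        pose proof (iter_ord_lt next g Hnext _ _ H) as Hlt; fold (e m) (e n) in Hlt;
        rewrite Hmn in Hlt; exact (ord_irrefl _ Hlt). }
    (* Reindex the family along [e], so that it becomes an intersection below a bound. *)
    set (K' c x := forall n, e n = c -> K n x).
    assert (HK' : forall c, club lt (K' c)).
    { intro c. destruct (classic (exists n, e n = c)) as [[n0 <-]|Hno].
      - apply (club_ext (K n0)); [apply HK|]. intro x. split.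
        + intros Hx n Hn. now rewrite (He _ _ Hn).
        + intro Hx. now apply Hx.
      - apply (club_ext (fun _ => True)); [apply club_full|]. intro x.
        split; [intros _ n Hn; exfalso; eauto | auto]. }
    destruct (seq_bounded e) as [u Hu].
    destruct (proj1 (club_inter_below u K' (fun c _ => HK' c)) g) as [x [Hx Hgx]].
    exists x. split; [|exact Hgx]. intro n. exact (Hx (e n) (Hu n) n eq_refl).
  - intros b [x [Hx1 Hx2]] Hs n. apply (proj2 (HK n)).
    + exists x; auto.
    + eapply is_sup_below_mono; [|exact Hs]. auto.
Qed.

Lemma club_diag (K : L -> L -> Prop) :
  (forall c, club lt (K c)) -> club lt (fun x => forall c, lt c x -> K c x).
Proof.
  intro HK. split.
  - intro g.
    assert (HF : forall x, exists y, lt x y /\ forall c, le lt c x -> K c y).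
    { intro x. destruct (ord_no_max x) as [z Hz].
      destruct (proj1 (club_inter_below z K (fun c _ => HK c)) z) as [y [Hy Hzy]].
      exists y. split; [eapply ord_lt_le_trans; eauto|].
      intros c Hc. apply Hy. eapply ord_le_lt_trans; eauto. }
    destruct (choice _ HF) as [F HFp].
    assert (HFinc : forall x, lt x (F x)) by apply HFp.
    set (a n := Nat.iter n F g).
    destruct (seq_bounded a) as [u Hu]. destruct (seq_sup_exists a u Hu) as [s [Hs _]].
    exists s. split; [|left; apply (proj1 Hs 0)].
    intros c Hc. destruct (proj2 Hs c Hc) as [n0 Hn0].
    apply (club_seq_sup a (fun m => a (S (Nat.max n0 m))) (K c) s (HK c) Hs).
    intro m. split; [|split; [apply iter_ord_lt; auto; lia | apply Hs]].
    apply HFp. eapply ord_le_trans; [exact Hn0 | apply iter_ord_le; auto; lia].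
  - intros b _ Hs c Hc. apply (proj2 (HK c)).
    + destruct (Hs c Hc) as [y [Hy1 [Hy2 Hy3]]]. exists y. auto.
    + intros g Hg. destruct (classic (lt g c)) as [h|h].
      * destruct (Hs c Hc) as [y [Hy1 [Hy2 Hy3]]].
        exists y. split; auto. split; [eapply ord_trans|]; eauto.
      * destruct (Hs g Hg) as [y [Hy1 [Hy2 Hy3]]]. exists y. split; auto.
        apply Hy1. eapply ord_le_lt_trans; [apply ord_not_lt|]; eauto.
Qed.

Lemma nonstationary_disjoint_club (T : L -> Prop) :
  ~ stationary lt T -> exists C, club lt C /\ forall x, C x -> ~ T x.
Proof.
  intro H. apply NNPP; intro Hn. apply H. intros C HC. apply NNPP; intro H2.
  apply Hn. exists C. split; auto. intros x Cx Tx. apply H2. eauto.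
Qed.

Lemma stationary_inter_club (T K : L -> Prop) : stationary lt T -> club lt K ->
  stationary lt (fun a => T a /\ K a).
Proof.
  intros HT HK C HC. destruct (HT _ (club_inter _ _ HC HK)) as [x [[Cx Kx] Tx]]. eauto.
Qed.

Lemma stationary_tail (T : L -> Prop) b :
  stationary lt T -> stationary lt (fun a => T a /\ lt b a).
Proof. intro HT. exact (stationary_inter_club _ _ HT (club_tail b)). Qed.

Lemma stationary_unbounded (T : L -> Prop) : stationary lt T -> forall b, exists a, T a /\ lt b a.
Proof. intros HT b. destruct (stationary_tail T b HT _ club_full) as [a [_ Ha]]. eauto. Qed.

Lemma stationary_split (T Q : L -> Prop) : stationary lt T ->
  stationary lt (fun a => T a /\ Q a) \/ stationary lt (fun a => T a /\ ~ Q a).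
Proof.
  intro HT. apply NNPP; intro Hn. apply not_or_and in Hn. destruct Hn as [H1 H2].
  destruct (nonstationary_disjoint_club _ H1) as [C1 [HC1 H1']].
  destruct (nonstationary_disjoint_club _ H2) as [C2 [HC2 H2']].
  destruct (HT _ (club_inter _ _ HC1 HC2)) as [x [[C1x C2x] Tx]].
  destruct (classic (Q x)); [apply (H1' x) | apply (H2' x)]; auto.
Qed.

Lemma stationary_countable_union (S : L -> Prop) (P : nat -> L -> Prop) :
  stationary lt S -> (forall x, S x -> exists n, P n x) ->
  exists n, stationary lt (fun x => S x /\ P n x).
Proof.
  intros HS HP. apply NNPP; intro Hn.
  assert (HK : forall n, exists C, club lt C /\ forall x, C x -> ~ (S x /\ P n x)).
  { intro n. apply nonstationary_disjoint_club. intro h. apply Hn. eauto. }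
  destruct (choice _ HK) as [K HKp].
  destruct (HS _ (club_countable_inter K (fun n => proj1 (HKp n)))) as [x [Kx Sx]].
  destruct (HP x Sx) as [n Pnx]. exact (proj2 (HKp n) x (Kx n) (conj Sx Pnx)).
Qed.

Lemma acc_club_in (b : L) (C : L -> Prop) : cf_gt_omega lt b -> club_in lt b C ->
  club_in lt b (fun a => acc lt C a /\ lt a b).
Proof.
  intros [_ Hcf] [Hb [Hu _]]. split; [|split].
  - now intros x [_ h].
  - intros g Hg.
    assert (Hstep : forall x, exists y, lt x b -> C y /\ lt x y /\ lt y b).
    { intro x. destruct (classic (lt x b)) as [Hx|Hx]; [|exists x; tauto].
      destruct (Hcf (fun _ => x) (fun _ => Hx)) as [h [Hhb Hxh]].
      destruct (Hu h Hhb) as [d [Cd Hhd]]. exists d. intros _.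
      split; [exact Cd|]. split; [eapply ord_lt_le_trans; [apply (Hxh 0)|]|]; eauto. }
    destruct (choice _ Hstep) as [F HF].
    destruct (Hu g Hg) as [c0 [Cc0 Hgc0]].
    set (a n := Nat.iter n F c0).
    assert (Ha : forall n, C (a n) /\ lt (a n) b).
    { intro n. induction n as [|n [_ IH]]; [split; [exact Cc0 | apply Hb, Cc0]|].
      destruct (HF _ IH) as [? [? ?]]. now split. }
    destruct (Hcf a (fun n => proj2 (Ha n))) as [u [Hub Hau]].
    destruct (seq_sup_exists a u Hau) as [s [Hs Hsu]].
    assert (Hsb : lt s b) by (eapply ord_le_lt_trans; eauto).
    exists s. split; [split; [split|] |].
    + destruct (Hu s Hsb) as [d [? ?]]. eauto.
    + apply (seq_sup_closed a (fun n => a (S n)) C s Hs). intro n.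
      split; [apply Ha|]. split; [apply (HF _ (proj2 (Ha n))) | apply Hs].
    + exact Hsb.
    + left. eapply ord_le_lt_trans; [exact Hgc0 | apply (proj1 Hs 0)].
  - intros b' Hb' _ Hs. split; [split|exact Hb'].
    + destruct (Hu b' Hb') as [d [? ?]]. eauto.
    + intros g Hg. destruct (Hs g Hg) as [a0 [[[_ Hsup] _] [Hga0 Ha0b']]].
      destruct (Hsup g Hga0) as [c' [? [? ?]]]. exists c'.
      split; [|split]; [| |eapply ord_trans]; eauto.
Qed.

(* Each [c] is decided on a club of [a]'s; the diagonal intersection of these
   clubs decides all [c < a] at once. *)
Lemma stationary_stabilize (T : L -> Prop) (E : L -> L -> Prop) : stationary lt T ->
  (forall a x, T a -> E a x -> lt x a) ->
  (forall c, ~ (stationary lt (fun a => T a /\ lt c a /\ E a c) /\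
                stationary lt (fun a => T a /\ lt c a /\ ~ E a c))) ->
  exists D T', stationary lt T' /\ (forall a, T' a -> T a) /\
    forall a, T' a -> forall x, E a x <-> D x /\ lt x a.
Proof.
  intros HT HEa Hdec.
  set (D c := ~ stationary lt (fun a => T a /\ lt c a /\ ~ E a c)).
  assert (HK : forall c, exists K, club lt K /\
     forall a, K a -> T a -> lt c a -> (E a c <-> D c)).
  { intro c. destruct (classic (D c)) as [Hd|Hd].
    - destruct (nonstationary_disjoint_club _ Hd) as [C [HC HC']]. exists C.
      split; [exact HC|]. intros a Ca Ta ca. split; [auto|].
      intros _. apply NNPP. intro h. apply (HC' a); auto.
    - assert (HA : ~ stationary lt (fun a => T a /\ lt c a /\ E a c)).
      { intro h. apply (Hdec c). split; [exact h | now apply NNPP]. }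
      destruct (nonstationary_disjoint_club _ HA) as [C [HC HC']]. exists C.
      split; [exact HC|]. intros a Ca Ta ca.
      split; [intro h; exfalso; apply (HC' a); auto | contradiction]. }
  destruct (choice _ HK) as [K HKp].
  exists D, (fun a => T a /\ forall c, lt c a -> K c a). split; [|split].
  - apply stationary_inter_club; [exact HT|]. apply club_diag. intro c. apply HKp.
  - now intros a [Ta _].
  - intros a [Ta HaK] x. split.
    + intro h. assert (xa : lt x a) by eauto.
      split; [apply (proj2 (HKp x) a); auto | exact xa].
    + intros [Dx xa]. now apply (proj2 (HKp x) a); auto.
Qed.

Section Coherent.
Variable Cs : L -> list (L -> Prop).
Hypothesis HCs : coherent_fin lt Cs.

Lemma thread_of_agreement (T D : L -> Prop) (E : L -> L -> Prop) :
  (forall b, exists a, T a /\ lt b a) -> (forall a, T a -> In (E a) (Cs a)) ->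
  (forall a, T a -> forall x, E a x <-> D x /\ lt x a) -> thread lt Cs D.
Proof.
  intros HT HE Hagree. destruct HCs as [_ [Hcl [_ Hcoh]]].
  assert (HEcl : forall a, T a -> club_in lt a (E a)) by (intros a Ta; apply Hcl, HE, Ta).
  split; [split|].
  - intro g. destruct (HT g) as [a [Ta ga]].
    destruct (proj1 (proj2 (HEcl a Ta)) g ga) as [d [Ed gd]].
    exists d. split; [apply (Hagree a Ta d), Ed | exact gd].
  - intros b [c [Dc cb]] Hs. destruct (HT b) as [a [Ta ba]].
    apply (Hagree a Ta b). apply (proj2 (proj2 (HEcl a Ta))); [exact ba| |].
    + exists c. split; [apply Hagree; eauto using ord_trans | exact cb].
    + intros g Hg. destruct (Hs g Hg) as [d [Dd [gd db]]]. exists d.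
      split; [apply Hagree; eauto using ord_trans | auto].
  - intros b [[d [Dd bd]] Hs]. destruct (HT d) as [a [Ta da]].
    assert (ba : lt b a) by (eapply ord_le_lt_trans; eauto).
    assert (Hacc : acc lt (E a) b).
    { split.
      - exists d. split; [apply Hagree; auto | exact bd].
      - intros g Hg. destruct (Hs g Hg) as [x [Dx [gx xb]]]. exists x.
        split; [apply Hagree; eauto using ord_trans | auto]. }
    destruct (Hcoh a (E a) (HE a Ta) b Hacc) as [D' [HD' HD'e]].
    exists D'. split; [exact HD'|]. intro x. rewrite HD'e, (Hagree a Ta x). split.
    + now intros [[? _] ?].
    + intros [Dx xb]. repeat split; eauto using ord_trans.
Qed.

(* Indices past the end fall back to the head of [Cs a], so [nth_club j a]
   always belongs to [Cs a]. *)
Definition nth_club (j : nat) (a : L) : L -> Prop :=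
  nth j (Cs a) (nth 0 (Cs a) (fun _ => False)).

Lemma nth_club_In j a : In (nth_club j a) (Cs a).
Proof.
  unfold nth_club. destruct (Compare_dec.lt_dec j (length (Cs a))) as [h|h].
  - now apply nth_In.
  - rewrite nth_overflow by lia. destruct (Cs a) eqn:E; [exfalso; exact (proj1 HCs a E) | now left].
Qed.

Lemma In_nth_club a C : In C (Cs a) -> exists j, j < length (Cs a) /\ nth_club j a = C.
Proof. apply In_nth. Qed.

Definition separated (j1 j2 : nat) (T1 T2 : L -> Prop) : Prop :=
  exists c, forall a1 a2, T1 a1 -> T2 a2 ->
    lt c a1 /\ lt c a2 /\ ~ (nth_club j1 a1 c <-> nth_club j2 a2 c).

Definition stationary_sub (T' T : L -> Prop) : Prop :=
  stationary lt T' /\ forall x, T' x -> T x.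

Lemma separated_mono j1 j2 T1 T2 T1' T2' : separated j1 j2 T1 T2 ->
  (forall x, T1' x -> T1 x) -> (forall x, T2' x -> T2 x) -> separated j1 j2 T1' T2'.
Proof. intros [c Hc] h1 h2. exists c. intros a1 a2 H1 H2. apply Hc; auto. Qed.

Hypothesis Hnothread : ~ exists D, thread lt Cs D.

Lemma separated_refine j1 j2 T1 T2 : stationary lt T1 -> stationary lt T2 ->
  exists T1' T2', stationary_sub T1' T1 /\ stationary_sub T2' T2 /\
    separated j1 j2 T1' T2'.
Proof.
  intros H1 H2. apply NNPP; intro Hn. apply Hnothread.
  destruct (stationary_stabilize T1 (nth_club j1)) as [D [T' [HT' [HT'T Hagree]]]].
  - exact H1.
  - intros a x _. apply (proj1 (proj2 HCs) a), nth_club_In.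
  - intros c [HA HB].
    destruct (stationary_split _ (fun a => nth_club j2 a c) (stationary_tail T2 c H2))
      as [H|H]; apply Hn.
    + exists (fun a => T1 a /\ lt c a /\ ~ nth_club j1 a c),
        (fun a => (T2 a /\ lt c a) /\ nth_club j2 a c).
      split; [split; [exact HB | now intros x []]|].
      split; [split; [exact H | now intros x [[] _]]|].
      exists c. intros a1 a2 [_ [? Hj1]] [[_ ?] Hj2]. repeat split; auto. tauto.
    + exists (fun a => T1 a /\ lt c a /\ nth_club j1 a c),
        (fun a => (T2 a /\ lt c a) /\ ~ nth_club j2 a c).
      split; [split; [exact HA | now intros x []]|].
      split; [split; [exact H | now intros x [[] _]]|].
      exists c. intros a1 a2 [_ [? Hj1]] [[_ ?] Hj2]. repeat split; auto. tauto.
  - exists D. apply (thread_of_agreement T' D (nth_club j1)); auto.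
    + exact (stationary_unbounded T' HT').
    + intros a _. apply nth_club_In.
Qed.

Lemma separated_refine_all (ps : list (nat * nat)) T1 T2 :
  stationary lt T1 -> stationary lt T2 ->
  exists T1' T2', stationary_sub T1' T1 /\ stationary_sub T2' T2 /\
    forall p, In p ps -> separated (fst p) (snd p) T1' T2'.
Proof.
  revert T1 T2. induction ps as [|p ps IH]; intros T1 T2 H1 H2.
  - exists T1, T2. repeat split; auto. intros p [].
  - destruct (IH T1 T2 H1 H2) as [A1 [A2 [[HA1 sA1] [[HA2 sA2] Hs]]]].
    destruct (separated_refine (fst p) (snd p) A1 A2 HA1 HA2)
      as [B1 [B2 [[HB1 sB1] [[HB2 sB2] Ht]]]].
    exists B1, B2. repeat split; auto.
    intros q [<-|Hq]; [exact Ht|]. eapply separated_mono; eauto.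
Qed.

Lemma separated_no_simultaneous_reflection n T1 T2 :
  (forall x, T1 x -> length (Cs x) <= n) -> (forall x, T2 x -> length (Cs x) <= n) ->
  (forall j1 j2, j1 < n -> j2 < n -> separated j1 j2 T1 T2) ->
  ~ exists b, reflects_at lt T1 b /\ reflects_at lt T2 b.
Proof.
  intros Hw1 Hw2 Hsep [b [[Hcf Hst1] [_ Hst2]]].
  destruct HCs as [Hne [Hcl [_ Hcoh]]].
  destruct (Cs b) as [|C l] eqn:Eb; [exfalso; exact (Hne b Eb)|].
  assert (HC : In C (Cs b)) by (rewrite Eb; now left).
  pose proof (acc_club_in b C Hcf (Hcl b C HC)) as Hacc.
  destruct (Hst1 _ Hacc) as [x1 [[Hx1 _] [Tx1 _]]].
  destruct (Hst2 _ Hacc) as [x2 [[Hx2 _] [Tx2 _]]].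
  destruct (Hcoh b C HC x1 Hx1) as [D1 [HD1 HD1e]].
  destruct (Hcoh b C HC x2 Hx2) as [D2 [HD2 HD2e]].
  destruct (In_nth_club x1 D1 HD1) as [j1 [Hj1 <-]].
  destruct (In_nth_club x2 D2 HD2) as [j2 [Hj2 <-]].
  destruct (Hsep j1 j2) as [c Hc]; [specialize (Hw1 x1 Tx1) | specialize (Hw2 x2 Tx2) |]; try lia.
  destruct (Hc x1 x2 Tx1 Tx2) as [cx1 [cx2 Hdiff]].
  apply Hdiff. rewrite HD1e, HD2e. tauto.
Qed.

End Coherent.

End ClubFilter.

Theorem theorem2p6 (L : Type) (lt : L -> L -> Prop)
  (Hwo : wellorder lt) (Hreg : regular lt) (Hunc : uncountable (L := L))
  (Hsq : square_fin lt) :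
  forall S : L -> Prop, stationary lt S ->
    exists S1 S2 : L -> Prop,
      (forall x, S1 x -> S x) /\ (forall x, S2 x -> S x) /\
      stationary lt S1 /\ stationary lt S2 /\
      ~ (exists a, reflects_at lt S1 a /\ reflects_at lt S2 a).
Proof.
  intros S HS. destruct Hsq as [Cs [HCs Hnothread]].
  destruct (stationary_countable_union L lt Hwo Hreg Hunc S
              (fun n x => length (Cs x) <= n) HS) as [n Hn].
  { intros x _. now exists (length (Cs x)). }
  set (pairs := list_prod (seq 0 n) (seq 0 n)).
  destruct (separated_refine_all L lt Hwo Hreg Hunc Cs HCs Hnothread pairs _ _ Hn Hn)
    as [S1 [S2 [[HS1 sub1] [[HS2 sub2] Hsep]]]].
  exists S1, S2.
  split; [intros x h; exact (proj1 (sub1 x h))|].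
  split; [intros x h; exact (proj1 (sub2 x h))|].
  split; [exact HS1|]. split; [exact HS2|].
  apply (separated_no_simultaneous_reflection L lt Hwo Cs HCs n).
  - intros x h. exact (proj2 (sub1 x h)).
  - intros x h. exact (proj2 (sub2 x h)).
  - intros j1 j2 h1 h2. apply (Hsep (j1, j2)), in_prod; apply in_seq; lia.
Qed.
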